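(* Let $\mathcal{C}\subset\mathbb{R}^n$ be a nonempty compact convex set with Euclidean diameter $D$, let $f$ be continuously differentiable with $\nabla f$ $L$-Lipschitz on $\mathcal{C}$, $f^\star=\min_{\mathcal{C}}f$, and $F_0=f(x^0)-f^\star$. Let $T\in\mathbb{N}$ and let $\{x^t\}_{t=0}^{T}$ be generated by the Boosted Frank–Wolfe algorithm described in the context with $m^t=\nabla f(x^t)$ and constant step decay $\eta_t=\frac1{\sqrt{T+1}}$. Then $$\min_{0\le t\le T}\langle\nabla f(x^t),x^t-s^t\rangle\le\frac{F_0+\frac{LD^2}{2}}{\sqrt{T+1}},$$ where $s^t=\mathrm{lmo}(\nabla f(x^t))$.
   Context: Euclidean norms; $D=\max_{x,y\in\mathcal{C}}\|x-y\|$. $\mathrm{lmo}(v)$ denotes a (fixed selection of a) point of $\arg\min_{s\in\mathcal{C}}\langle s,v\rangle$. $\mathrm{align}(d,\hat d)=\frac{\langle d,\hat d\rangle}{\|d\|\|\hat d\|}$ if $\hat d\ne0$, $-1$ if $\hat d=0$. Algorithm: inputs $K\ge1$, $\delta\in(0,1]$, step decays $\eta_t>0$, a vector $m^{\rm init}$; $x^0=\mathrm{lmo}(m^{\rm init})$. At iteration $t$ a vector $m^t$ is formed. Boosting: $\psi^0=0$, $\Lambda_t=0$, $k=0$; while $k\le K-1$: $r^k=-m^t-\psi^k$, $v^k=\mathrm{lmo}(-r^k)$; if $k=0$, $s^t=v^0$; if $\psi^k\ne0$, $u^k$ is whichever of $v^k-x^t$, $-\psi^k/\|\psi^k\|$ has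 the larger inner product with $r^k$, else $u^k=v^k-x^t$; if $u^k=0$ stop; $\lambda_k=\langle r^k,u^k\rangle/\|u^k\|^2$, $\phi^k=\psi^k+\lambda_ku^k$; if $\mathrm{align}(-m^t,\phi^k)-\mathrm{align}(-m^t,\psi^k)\ge\delta$ then $\psi^{k+1}=\phi^k$, $\Lambda_t\leftarrow\Lambda_t+\lambda_k$ if $u^k=v^k-x^t$ and $\Lambda_t\leftarrow\Lambda_t(1-\lambda_k/\|\psi^k\|)$ otherwise, $k\leftarrow k+1$; else stop. With $\psi$ the last accepted candidate, $\tilde d^t=\psi/\Lambda_t$ if $\Lambda_t\ne0$, else $0$. $\gamma_t=\min\{\eta_t\|s^t-x^t\|/\|\tilde d^t\|,1\}$ if $\tilde d^t\ne0$, else $1$. If $\gamma_t<1$: $x^{t+1}=x^t+\gamma_t\tilde d^t$; otherwise $x^{t+1}=x^t+\eta_t(s^t-x^t)$. *)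

From HB Require Import structures.
From mathcomp Require Import all_boot all_order all_algebra.
From mathcomp Require Import all_classical all_reals all_analysis.
Set Implicit Arguments. Unset Strict Implicit. Unset Printing Implicit Defensive.
Import Order.TTheory GRing.Theory Num.Theory.
Import numFieldNormedType.Exports.
Local Open Scope classical_set_scope.
Local Open Scope ring_scope.

Section BFW.
Variables (R : realType) (n : nat).
Notation vec := 'rV[R]_n.

Definition dot (u v : vec) : R := \sum_(i < n) u ord0 i * v ord0 i.
Definition enorm (u : vec) : R := Num.sqrt (dot u u).

Definition align (d dh : vec) : R :=
  if dh == 0 then -1 else dot d dh / (enorm d * enorm dh).

Definition is_diameter (C : set vec) (D : R) : Prop :=
  (exists x y, C x /\ C y /\ enorm (x - y) = D) /\
  (forall x y, C x -> C y -> enorm (x - y) <= D).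

Definition is_min_value (f : vec -> R) (C : set vec) (fstar : R) : Prop :=
  (exists x, C x /\ f x = fstar) /\ (forall x, C x -> fstar <= f x).

Definition is_lmo (C : set vec) (lmo : vec -> vec) : Prop :=
  forall v, C (lmo v) /\ forall s, C s -> dot (lmo v) v <= dot s v.

(* The boosting loop (at most [fuel] more iterations).  State: psi^k, Lambda_t.
   Inputs: m = m^t, x = x^t.  Returns (last accepted psi, Lambda_t). *)
Fixpoint boost (lmo : vec -> vec) (delta : R) (m x : vec) (fuel : nat)
    (psi : vec) (Lam : R) : vec * R :=
  match fuel with
  | 0%N => (psi, Lam)
  | fuel'.+1 =>
    let r := - m - psi in
    let v := lmo (- r) in
    let fw := v - x in
    let aw := - ((enorm psi)^-1 *: psi) in
    (* is_fw = true iff u^k = v^k - x^t (ties broken towards v^k - x^t) *)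
    let is_fw := ~~ ((psi != 0) && (dot r fw < dot r aw)) in
    let u := if is_fw then fw else aw in
    if u == 0 then (psi, Lam) else
    let lam := dot r u / (enorm u ^+ 2) in
    let phi := psi + lam *: u in
    if delta <= align (- m) phi - align (- m) psi then
      boost lmo delta m x fuel' phi
        (if is_fw then Lam + lam else Lam * (1 - lam / enorm psi))
    else (psi, Lam)
  end.

Definition bfw_step (lmo : vec -> vec) (K : nat) (delta eta : R) (m x : vec)
    : vec :=
  let s := lmo m in
  let pl := boost lmo delta m x K 0 0 in
  let psi := pl.1 in
  let Lam := pl.2 in
  let dt := if Lam != 0 then Lam^-1 *: psi else 0 in
  let gamma := if dt != 0 then Num.min (eta * enorm (s - x) / enorm dt) 1
               else 1 in
  if gamma < 1 then x + gamma *: dt else x + eta *: (s - x).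

Fixpoint bfw_iter (lmo : vec -> vec) (grad : vec -> vec) (K : nat)
    (delta : R) (eta : nat -> R) (minit : vec) (t : nat) : vec :=
  match t with
  | 0%N => lmo minit
  | t'.+1 => let x := bfw_iter lmo grad K delta eta minit t' in
             bfw_step lmo K delta (eta t') (grad x) x
  end.

End BFW.

(* Along the boosting loop, either psi = Lambda = 0 or Lambda > 0, the point
   x + psi / Lambda lies in C, and align(-m, psi) is nonnegative and at least
   align(-m, s - x).  A Frank-Wolfe update keeps this, while an away update only
   rescales psi, which cannot raise a nonnegative alignment, so it is always
   rejected.  Hence
   every BFW step y either is the plain Frank-Wolfe step or moves along the
   boosted direction by exactly eta |s - x|; in both cases y lies in C,
   |y - x| <= eta D and <grad f(x), y - x> <= -eta gap(x).  The descent lemma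
   then gives f(y) <= f(x) - eta gap(x) + L D^2 eta^2 / 2; summing over T + 1
   steps with eta = 1 / sqrt(T + 1) and using f >= f* bounds the mean gap, and
   the minimum is below the mean. *)

From HB Require Import structures.
From mathcomp Require Import all_boot all_order all_algebra.
From mathcomp Require Import all_classical all_reals all_analysis.
From mathcomp Require Import ring lra.
Import Order.TTheory GRing.Theory Num.Theory.
Import numFieldNormedType.Exports.
Set Implicit Arguments. Unset Strict Implicit. Unset Printing Implicit Defensive.
Local Open Scope classical_set_scope.
Local Open Scope ring_scope.

Section InnerProduct.
Variables (R : realType) (n : nat).
Implicit Types (u v w : 'rV[R]_n) (k : R).

Lemma dotC u v : dot u v = dot v u.
Proof. by apply: eq_bigr => i _; rewrite mulrC. Qed.

Lemma dotDl u w v : dot (u + w) v = dot u v + dot w v.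
Proof. by rewrite /dot -big_split; apply: eq_bigr => i _; rewrite mxE mulrDl. Qed.

Lemma dotZl k u v : dot (k *: u) v = k * dot u v.
Proof. by rewrite /dot mulr_sumr; apply: eq_bigr => i _; rewrite mxE mulrA. Qed.

Lemma dotNl u v : dot (- u) v = - dot u v.
Proof. by rewrite -scaleN1r dotZl mulN1r. Qed.

Lemma dotBl u w v : dot (u - w) v = dot u v - dot w v.
Proof. by rewrite dotDl dotNl. Qed.

Lemma dotZr k u v : dot v (k *: u) = k * dot v u.
Proof. by rewrite dotC dotZl dotC. Qed.

Lemma dotNr u v : dot v (- u) = - dot v u.
Proof. by rewrite dotC dotNl dotC. Qed.

Lemma dotBr u w v : dot v (u - w) = dot v u - dot v w.
Proof. by rewrite !(dotC v) dotBl. Qed.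

Lemma dot0l v : dot 0 v = 0.
Proof. by rewrite -(scale0r 0) dotZl mul0r. Qed.

Lemma dot0r v : dot v 0 = 0.
Proof. by rewrite dotC dot0l. Qed.

Lemma dotvv_ge0 u : 0 <= dot u u.
Proof. by apply: sumr_ge0 => i _; rewrite -expr2 sqr_ge0. Qed.

Lemma dotvv_eq0 u : (dot u u == 0) = (u == 0).
Proof.
apply/idP/eqP => [|->]; last by rewrite dot0l.
rewrite psumr_eq0 => [/allP u0|i _]; last by rewrite -expr2 sqr_ge0.
apply/rowP => i; rewrite mxE; apply/eqP.
by rewrite -sqrf_eq0 expr2; exact: u0 i (mem_index_enum _).
Qed.

Lemma enorm_ge0 u : 0 <= enorm u.
Proof. exact: sqrtr_ge0. Qed.

Lemma enorm_sqr u : enorm u ^+ 2 = dot u u.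
Proof. by rewrite sqr_sqrtr // dotvv_ge0. Qed.

Lemma enorm_eq0 u : (enorm u == 0) = (u == 0).
Proof. by rewrite sqrtr_eq0 le_eqVlt ltNge dotvv_ge0 orbF dotvv_eq0. Qed.

Lemma enorm_gt0 u : (0 < enorm u) = (u != 0).
Proof. by rewrite lt_def enorm_eq0 enorm_ge0 andbT. Qed.

Lemma enorm0 : enorm (0 : 'rV[R]_n) = 0.
Proof. by apply/eqP; rewrite enorm_eq0. Qed.

Lemma enormZ k u : enorm (k *: u) = `|k| * enorm u.
Proof. by rewrite /enorm dotZl dotZr mulrA -expr2 sqrtrM ?sqr_ge0 // sqrtr_sqr. Qed.

Lemma enormN u : enorm (- u) = enorm u.
Proof. by rewrite -scaleN1r enormZ normrN normr1 mul1r. Qed.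

(* Expand [0 <= dot (b u - a v) (b u - a v)] with [a = |u|], [b = |v|]. *)
Lemma dot_le_enorm u v : dot u v <= enorm u * enorm v.
Proof.
have [->|u0] := eqVneq u 0; first by rewrite dot0l enorm0 mul0r.
have [->|v0] := eqVneq v 0; first by rewrite dot0r enorm0 mulr0.
set a := enorm u; set b := enorm v.
have a0 : 0 < a by rewrite enorm_gt0.
have b0 : 0 < b by rewrite enorm_gt0.
have := dotvv_ge0 (b *: u - a *: v).
rewrite !(dotBl, dotBr, dotZl, dotZr) -!enorm_sqr -/a -/b (dotC v u) => sq_ge0.
have : 0 <= 2 * a * b * (a * b - dot u v) by nra.
by rewrite pmulr_rge0 ?subr_ge0 // !mulr_gt0.
Qed.

End InnerProduct.

Section Alignment.
Variables (R : realType) (n : nat).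
Implicit Types (d u w : 'rV[R]_n) (k : R).

Lemma align0 d : align d 0 = -1.
Proof. by rewrite /align eqxx. Qed.

Lemma align_neq0 d u : -1 < align d u -> u != 0.
Proof. by apply: contraTneq => ->; rewrite align0 ltxx. Qed.

Lemma dot_align d u : u != 0 -> dot d u = enorm d * enorm u * align d u.
Proof.
move=> u0; rewrite /align (negbTE u0).
have [->|d0] := eqVneq d 0; first by rewrite dot0l enorm0 !mul0r.
by field; rewrite !enorm_eq0 d0 u0.
Qed.

Lemma align_ge0 d u : u != 0 -> 0 <= dot d u -> 0 <= align d u.
Proof.
by move=> u0 du; rewrite /align (negbTE u0) divr_ge0 // mulr_ge0 ?enorm_ge0.
Qed.

Lemma alignZ d u k : 0 < k -> align d (k *: u) = align d u.
Proof.
move=> k0; rewrite /align scaler_eq0 (gt_eqF k0) /=; case: eqP => // u0.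
by rewrite dotZr enormZ gtr0_norm // mulrCA -mulf_div divff ?gt_eqF // mul1r.
Qed.

Lemma alignN d u : u != 0 -> align d (- u) = - align d u.
Proof.
by move=> u0; rewrite /align oppr_eq0 (negbTE u0) dotNr enormN mulNr.
Qed.

Lemma alignZ_le d u k : 0 <= align d u -> align d (k *: u) <= align d u.
Proof.
move=> a0; have [k0|k0|->] := ltgtP k 0; last 2 first.
- by rewrite alignZ.
- by rewrite scale0r align0 (le_trans _ a0) // lerN10.
have u0 : u != 0 by apply: align_neq0; apply: lt_le_trans a0; rewrite ltrN10.
rewrite -[k]opprK scaleNr alignN ?alignZ ?oppr_gt0 //; last first.
  by rewrite scaler_eq0 oppr_eq0 negb_or (ltr0_neq0 k0).
by rewrite (le_trans _ a0) // oppr_le0.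
Qed.

Lemma dotZ_align_le m u w (eta : R) : u != 0 -> 0 <= eta ->
  align (- m) w <= align (- m) u ->
  dot m ((eta * enorm w / enorm u) *: u) <= eta * dot m w.
Proof.
move=> u0 eta_ge0 a_le.
have [->|w0] := eqVneq w 0; first by rewrite enorm0 mulr0 !mul0r scale0r !dot0r mulr0.
have dotmE v : dot m v = - dot (- m) v by rewrite dotNl opprK.
rewrite dotZr !dotmE (dot_align _ u0) (dot_align _ w0).
set k := enorm (- m).
have -> : eta * enorm w / enorm u * - (k * enorm u * align (- m) u) =
    eta * - (k * enorm w * align (- m) u).
  by field; rewrite enorm_eq0.
by rewrite ler_wpM2l // lerN2 ler_wpM2l // mulr_ge0 ?enorm_ge0.
Qed.

End Alignment.

Lemma convex_segment (R : realType) (n : nat) (C : set 'rV[R]_n) a b g :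
  convex_set (C : set (convex_lmodType 'rV[R]_n)) ->
  C a -> C b -> 0 <= g <= 1 -> C (a + g *: (b - a)).
Proof.
move=> cC Ca Cb /andP[g0 g1].
have -> : a + g *: (b - a) = g *: b + (1 - g) *: a.
  by apply/rowP => i; rewrite !mxE; ring.
by have := cC b a (Itv01 g0 g1); rewrite !inE; apply.
Qed.

Section Boosting.
Variables (R : realType) (n : nat) (C : set 'rV[R]_n) (lmo : 'rV[R]_n -> 'rV[R]_n).
Variables (delta : R) (m x : 'rV[R]_n).
Hypothesis convC : convex_set (C : set (convex_lmodType 'rV[R]_n)).
Hypothesis lmoC : is_lmo C lmo.
Hypothesis Cx : C x.
Hypothesis delta_gt0 : 0 < delta.

(* [Lam^-1 *: psi] is the boosted direction [d~] of the paper. *)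
Definition boost_good (psi : 'rV[R]_n) (Lam : R) :=
  [/\ 0 < Lam, C (x + Lam^-1 *: psi),
      align (- m) (lmo m - x) <= align (- m) psi & 0 <= align (- m) psi].

Definition boost_invariant psi Lam := (psi = 0 /\ Lam = 0) \/ boost_good psi Lam.

Lemma lmo_dot_ge0 v : 0 <= dot (- v) (lmo v - x).
Proof.
have [_ /(_ x Cx)] := lmoC v.
by rewrite dotNl dotBr (dotC v (lmo v)) (dotC v x) oppr_ge0 subr_le0.
Qed.

Lemma boost_good_first lam : 0 < lam -> lmo m != x ->
  boost_good (lam *: (lmo m - x)) lam.
Proof.
move=> lam_gt0 sx; have [Cs _] := lmoC m.
have sx0 : lmo m - x != 0 by rewrite subr_eq0.
split; rewrite ?alignZ //.
- by rewrite scalerA mulVf ?gt_eqF // scale1r addrC subrK.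
- by rewrite align_ge0 // lmo_dot_ge0.
Qed.

(* [x + psi'/Lam'] is a convex combination of [x + psi/Lam] and [v]. *)
Lemma boost_good_fw psi Lam v (lam : R) : boost_good psi Lam -> C v -> 0 <= lam ->
  align (- m) psi <= align (- m) (psi + lam *: (v - x)) ->
  boost_good (psi + lam *: (v - x)) (Lam + lam).
Proof.
move=> [Lam_gt0 Cc a_ge a_ge0] Cv lam_ge0 a_le.
have Lam'_gt0 : 0 < Lam + lam by rewrite ltr_wpDr.
split => //; try exact: le_trans a_le.
have -> : x + (Lam + lam)^-1 *: (psi + lam *: (v - x)) =
    (x + Lam^-1 *: psi) + (lam / (Lam + lam)) *: (v - (x + Lam^-1 *: psi)).
  by apply/rowP => i; rewrite !mxE; field; rewrite !gt_eqF.
apply: convex_segment => //.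
by rewrite divr_ge0 ?(ltW Lam'_gt0) //= ler_pdivrMr // mul1r lerDr ltW.
Qed.

Lemma boost_invariantP fuel psi Lam : boost_invariant psi Lam ->
  boost_invariant (boost lmo delta m x fuel psi Lam).1
                  (boost lmo delta m x fuel psi Lam).2.
Proof.
elim: fuel psi Lam => [|fuel IH] psi Lam inv //=.
set r := - m - psi; set v := lmo (- r); set fw := v - x.
set aw := - ((enorm psi)^-1 *: psi).
case: ifP => [_|_]; first exact: inv.
case: ifP => [acc|_]; last exact: inv.
apply: IH.
case: (boolP (~~ ((psi != 0) && (dot r fw < dot r aw)))) acc
  => [_|/negPn/andP[psi0 _]] acc.
- set lam := dot r fw / _ in acc *.
  have lam_ge0 : 0 <= lam.
    rewrite divr_ge0 ?exprn_ge0 ?enorm_ge0 //.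
    by have := lmo_dot_ge0 (- r); rewrite opprK.
  have a_lt : align (- m) psi < align (- m) (psi + lam *: fw).
    by rewrite -subr_gt0 (lt_le_trans delta_gt0 acc).
  case: inv => [[psi0 Lam0]|good]; right; last first.
    by apply: boost_good_fw => //; [have [] := lmoC (- r) | exact: ltW].
  have fw_s : fw = lmo m - x by rewrite /fw /v /r psi0 subr0 opprK.
  rewrite psi0 align0 add0r in a_lt; rewrite psi0 Lam0 !add0r fw_s.
  have := align_neq0 a_lt; rewrite scaler_eq0 negb_or => /andP[lam0 fw0].
  by apply: boost_good_first; rewrite ?lt0r ?lam0 // -subr_eq0 -fw_s.
- set lam := dot r aw / _ in acc.
  case: inv => [[psi00 _]|[_ _ _ a_ge0]]; first by rewrite psi00 eqxx in psi0.
  have E : psi + lam *: aw = (1 - lam / enorm psi) *: psi.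
    by rewrite /aw scalerN scalerA scalerBl scale1r.
  have := lt_le_trans delta_gt0 acc; rewrite E subr_gt0 ltNge.
  by rewrite alignZ_le.
Qed.

End Boosting.

Section Step.
Variables (R : realType) (n : nat) (C : set 'rV[R]_n) (lmo : 'rV[R]_n -> 'rV[R]_n).
Variables (K : nat) (delta eta : R) (m x : 'rV[R]_n).
Hypothesis convC : convex_set (C : set (convex_lmodType 'rV[R]_n)).
Hypothesis lmoC : is_lmo C lmo.
Hypothesis Cx : C x.
Hypothesis delta_gt0 : 0 < delta.
Hypothesis eta_ge0 : 0 <= eta.
Hypothesis eta_le1 : eta <= 1.

Lemma bfw_step_spec : let y := bfw_step lmo K delta eta m x in
  [/\ C y, dot m (y - x) <= eta * dot m (lmo m - x)
         & enorm (y - x) <= eta * enorm (lmo m - x)].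
Proof.
rewrite /bfw_step.
have := boost_invariantP (m := m) convC lmoC Cx delta_gt0 K (or_introl (conj erefl erefl)).
case: boost => psi Lam /= inv.
set s := lmo m; have [Cs _] := lmoC m.
set dt := if Lam != 0 then _ else _.
set g := if dt != 0 then _ else _.
case: ltP => [g_lt1|_]; last first.
  rewrite addrAC subrr add0r dotZr enormZ ger0_norm //.
  by split => //; apply: convex_segment; rewrite ?eta_ge0.
have dt0 : dt != 0 by apply: contraTneq g_lt1 => dt0; rewrite /g dt0 eqxx ltxx.
have Lam0 : Lam != 0 by apply: contraNneq dt0 => Lam0; rewrite /dt Lam0 eqxx.
have [Lam_gt0 Cdt a_le _] : boost_good C lmo m x psi Lam.
  by case: inv => [[_ Lam00]|//]; rewrite Lam00 eqxx in Lam0.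
have dtE : dt = Lam^-1 *: psi by rewrite /dt Lam0.
have gE : g = eta * enorm (s - x) / enorm dt.
  by move: g_lt1; rewrite /g dt0 /Num.min; case: ifP => // _; rewrite ltxx.
have g_ge0 : 0 <= g by rewrite gE !mulr_ge0 ?invr_ge0 ?enorm_ge0.
rewrite addrAC subrr add0r enormZ ger0_norm //; split.
- have Cxdt : C (x + dt) by rewrite dtE.
  have := convex_segment convC Cx Cxdt.
  by rewrite addrAC subrr add0r; apply; rewrite g_ge0 ltW.
- by rewrite gE dotZ_align_le // dtE alignZ ?invr_gt0.
- by rewrite gE divfK ?enorm_eq0.
Qed.

End Step.

Section Smooth.
Variables (R : realType) (n : nat) (C : set 'rV[R]_n) (f : 'rV[R]_n -> R).
Variables (grad : 'rV[R]_n -> 'rV[R]_n) (L : R).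
Hypothesis convC : convex_set (C : set (convex_lmodType 'rV[R]_n)).
Hypothesis f_grad : forall x, differentiable f x /\ forall v, 'd f x v = dot (grad x) v.
Hypothesis grad_lipschitz :
  forall x y, C x -> C y -> enorm (grad x - grad y) <= L * enorm (x - y).

Lemma is_derive_along (x w : 'rV[R]_n) (t : R) :
  is_derive t 1 (fun s : R => f (x + s *: w)) (dot (grad (x + t *: w)) w).
Proof.
have E : (fun h : R => h^-1 *: (((fun s : R => f (x + s *: w)) \o shift t) (h *: 1)
            - f (x + t *: w))) =
         (fun h : R => h^-1 *: ((f \o shift (x + t *: w)) (h *: w) - f (x + t *: w))).
  apply: funext => h /=; congr (_ *: (f _ - _)).
  rewrite -[h%:A]/(h * 1) mulr1; apply/rowP => i; rewrite !mxE; ring.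
have [df dfE] := f_grad (x + t *: w).
have dv : derivable f (x + t *: w) w by exact: diff_derivable.
have dF : derivable (fun s : R => f (x + s *: w)) t 1 by rewrite /derivable E.
have := derivableP dF.
have -> : 'D_1 (fun s : R => f (x + s *: w)) t = 'D_w f (x + t *: w) by rewrite /derive E.
by rewrite deriveE // dfE.
Qed.

Lemma descent_lemma x y : C x -> C y ->
  f y <= f x + dot (grad x) (y - x) + L / 2 * enorm (y - x) ^+ 2.
Proof.
move=> Cx Cy.
set w := y - x; set a := dot (grad x) w; set c := L / 2 * enorm w ^+ 2.
pose F (s : R) := f (x + s *: w).
pose phi := F - a \*: (@id R) - c \*: (@id R) ^+ 2.
have dphi t : is_derive t (1 : R) phi (dot (grad (x + t *: w)) w - a - c * (2 * t)).
  apply: is_derive_eq; first by apply: is_deriveB; first apply: is_deriveB;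
    exact: is_derive_along.
  by rewrite -[a%:A]/(a * 1) -[(2 * t ^+ 1)%:A]/((2 * t ^+ 1) * 1) !mulr1 expr1.
have cphi : {within `[0, 1], continuous phi}.
  by apply: derivable_within_continuous => t _; have [] := dphi t.
have [xi] := MVT (@ltr01 R) (fun t _ => dphi t) cphi.
rewrite in_itv /= => /andP[xi_gt0 xi_lt1].
rewrite -[phi 1]/(F 1 - a * 1 - c * 1 ^+ 2) -[phi 0]/(F 0 - a * 0 - c * 0 ^+ 2).
rewrite /F scale1r scale0r addr0.
have -> : x + w = y by rewrite /w addrC subrK.
rewrite expr1n expr0n /= !mulr1 !mulr0 !subr0 mulr1.
set z := x + xi *: w.
have Cz : C z by have := convex_segment convC Cx Cy; rewrite -/w; apply; rewrite !ltW.
have grad_z : dot (grad z) w - a <= L * xi * enorm w ^+ 2.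
  rewrite /a -dotBl; apply: le_trans (dot_le_enorm _ _) _.
  have := ler_wpM2r (enorm_ge0 w) (grad_lipschitz Cz Cx).
  by rewrite /z addrAC subrr add0r enormZ gtr0_norm // expr2 !mulrA.
have -> : c * (2 * xi) = L * xi * enorm w ^+ 2 by rewrite /c; field.
lra.
Qed.

End Smooth.

Lemma exists_le_mean (R : realFieldType) (G : nat -> R) (N : nat) :
  exists2 t, (t < N.+1)%N & G t <= (\sum_(i < N.+1) G i) / N.+1%:R.
Proof.
set mu := _ / _.
have [/existsP[i Gi]|/existsPn G_gt] := boolP [exists i : 'I_N.+1, G i <= mu].
  by exists i.
have : \sum_(i < N.+1) mu < \sum_(i < N.+1) G i.
  apply: ltr_sum => [|i _]; first by apply/hasP; exists ord0; rewrite ?mem_index_enum.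
  by rewrite ltNge G_gt.
by rewrite sumr_const card_ord -mulr_natr divfK ?pnatr_eq0 // ltxx.
Qed.

Section Iterates.
Variables (R : realType) (n : nat) (C : set 'rV[R]_n) (f : 'rV[R]_n -> R).
Variables (grad : 'rV[R]_n -> 'rV[R]_n) (L D : R) (lmo : 'rV[R]_n -> 'rV[R]_n).
Variables (K : nat) (delta : R) (eta : nat -> R) (minit : 'rV[R]_n).
Hypothesis convC : convex_set (C : set (convex_lmodType 'rV[R]_n)).
Hypothesis f_grad : forall x, differentiable f x /\ forall v, 'd f x v = dot (grad x) v.
Hypothesis grad_lipschitz :
  forall x y, C x -> C y -> enorm (grad x - grad y) <= L * enorm (x - y).
Hypothesis diamC : is_diameter C D.
Hypothesis lmoC : is_lmo C lmo.
Hypothesis delta_gt0 : 0 < delta.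
Hypothesis eta_01 : forall t, 0 <= eta t <= 1.

Definition fw_gap (x : 'rV[R]_n) := dot (grad x) (x - lmo (grad x)).

(* The hypotheses allow [L < 0], but only for a one-point [C]. *)
Lemma lipschitz_ge0_or_diameter0 : 0 <= L \/ D = 0.
Proof.
have [[x [y [Cx [Cy <-]]]] _] := diamC.
have [L_ge0|L_lt0] := leP 0 L; [by left | right].
have := le_trans (enorm_ge0 (grad x - grad y)) (grad_lipschitz Cx Cy).
by rewrite nmulr_rge0 // => xy_le0; apply/eqP; rewrite eq_le xy_le0 enorm_ge0.
Qed.

Lemma lipschitz_mul_sqr_le (u : 'rV[R]_n) r : 0 <= r -> enorm u <= r * D ->
  L * enorm u ^+ 2 <= L * (r * D) ^+ 2.
Proof.
move=> r_ge0 u_le; case: lipschitz_ge0_or_diameter0 => [L_ge0|D0].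
  by rewrite ler_wpM2l // !expr2 ler_pM ?enorm_ge0.
have -> : enorm u = 0 by apply/eqP; rewrite eq_le enorm_ge0 -(mulr0 r) -D0 u_le.
by rewrite D0 mulr0.
Qed.

Lemma bfw_step_decrease x e : C x -> 0 <= e <= 1 ->
  let y := bfw_step lmo K delta e (grad x) x in
  C y /\ f y <= f x - e * fw_gap x + L * D ^+ 2 / 2 * e ^+ 2.
Proof.
move=> Cx /andP[e_ge0 e_le1] y.
have [Cy dec dist] := bfw_step_spec K (grad x) convC lmoC Cx delta_gt0 e_ge0 e_le1.
split => //.
have [Cs _] := lmoC (grad x).
have sD : enorm (lmo (grad x) - x) <= D by have [_] := diamC; apply.
have := lipschitz_mul_sqr_le e_ge0 (le_trans dist (ler_wpM2l e_ge0 sD)).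
have := descent_lemma convC f_grad grad_lipschitz Cx Cy.
rewrite /fw_gap !dotBr exprMn; rewrite !dotBr in dec.
nra.
Qed.

Local Notation x := (bfw_iter lmo grad K delta eta minit).

Lemma bfw_iter_descent k : C (x k) /\
  f (x k) <= f (x 0%N) - \sum_(t < k) eta t * fw_gap (x t)
                       + L * D ^+ 2 / 2 * \sum_(t < k) eta t ^+ 2.
Proof.
elim: k => [|k [Cxk IH]].
  by split; [have [] := lmoC minit | rewrite !big_ord0 subr0 mulr0 addr0].
have [Cy dec] := bfw_step_decrease Cxk (eta_01 k).
split => //; rewrite !big_ord_recr /=.
nra.
Qed.

End Iterates.

Theorem theorem8 (R : realType) (n : nat) (C : set 'rV[R]_n)
    (f : 'rV[R]_n -> R) (grad : 'rV[R]_n -> 'rV[R]_n) (L D fstar : R)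
    (lmo : 'rV[R]_n -> 'rV[R]_n) (K : nat) (delta : R)
    (minit : 'rV[R]_n) (T : nat) :
  C !=set0 -> compact C -> convex_set (C : set (convex_lmodType 'rV[R]_n)) ->
  (forall x, differentiable f x /\ forall v, 'd f x v = dot (grad x) v) ->
  continuous grad ->
  (forall x y, C x -> C y -> enorm (grad x - grad y) <= L * enorm (x - y)) ->
  is_diameter C D ->
  is_min_value f C fstar ->
  is_lmo C lmo ->
  (0 < K)%N -> 0 < delta <= 1 ->
  let eta := fun _ : nat => 1 / Num.sqrt (T.+1)%:R in
  let x := bfw_iter lmo grad K delta eta minit in
  exists2 t : nat, (t <= T)%N &
    dot (grad (x t)) (x t - lmo (grad (x t)))
      <= (f (x 0%N) - fstar + L * D ^+ 2 / 2) / Num.sqrt (T.+1)%:R.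
Proof.
move=> _ _ convC f_grad _ grad_lip diamC [_ fstar_le] lmoC _ /andP[delta_gt0 _] eta x.
set sq := Num.sqrt T.+1%:R.
have sq_gt0 : 0 < sq by rewrite sqrtr_gt0 ltr0n.
have sqr_sq : sq ^+ 2 = T.+1%:R by rewrite sqr_sqrtr // ler0n.
have eta_01 t : 0 <= eta t <= 1.
  rewrite /eta divr_ge0 ?(ltW sq_gt0) //= ler_pdivrMr // mul1r.
  by rewrite /sq -[X in X <= _]sqrtr1 ler_sqrt // ler1n.
have [CxT descT] :=
  bfw_iter_descent K minit convC f_grad grad_lip diamC lmoC delta_gt0 eta_01 T.+1.
have [t tT gap_le] := exists_le_mean (fw_gap grad lmo \o x) T.
exists t => //; apply: le_trans gap_le _.
set S := \sum_(i < T.+1) _.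
have sum_gap : \sum_(t < T.+1) eta t * fw_gap grad lmo (x t) = S / sq.
  by rewrite mulr_suml; apply: eq_bigr => i _; rewrite /eta div1r mulrC.
have sum_eta2 : \sum_(t < T.+1) eta t ^+ 2 = 1.
  rewrite (eq_bigr (fun _ => (1 / sq) ^+ 2)) // sumr_const card_ord -mulr_natr -sqr_sq.
  by rewrite expr_div_n expr1n mul1r mulVf // expf_neq0 // gt_eqF.
rewrite sum_gap sum_eta2 mulr1 in descT.
have := fstar_le _ CxT.
rewrite -sqr_sq expr2 invfM mulrA ler_pM2r ?invr_gt0 //.
lra.
Qed.
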